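(* Let $p\in\{*,\le\omega\}$ and $L\subseteq\Sigma^p$ (where $\Sigma^{\le\omega}=\Sigma^*\cup\Sigma^\omega$). Then $\gamma_p(\alpha_p(L))\subseteq L(\mathfrak A)$ if and only if $L\subseteq L(\mathfrak A)$.
   Context: $\Sigma$ is a finite alphabet; concatenation $w\cdot u$ equals $wu$ if $w$ is finite and $w$ if $w$ is infinite, extended pointwise to languages. For $A\subseteq\Sigma^*$, $A^\omega$ is the set of all words $w_0w_1w_2\cdots$ with $w_i\in A$, and $CD^\omega$ means $C\cdot D^\omega$. Fix an extended Büchi automaton $\mathfrak A=(Q,\Sigma,\delta,q_0,F)$ (finite states, $\delta:Q\times\Sigma\to\mathcal P(Q)$, initial $q_0$, final $F$). Its language $L(\mathfrak A)\subseteq\Sigma^{\le\omega}$ consists of all finite words along which some path from $q_0$ reaches a final state, together with all infinite words having a run from $q_0$ visiting final states infinitely often. For $w\in\Sigma^*$ write $p\overset{w}{\leadsto}q$ if $q$ is reachable from $p$ reading $w$, and $p\overset{w}{\leadsto}_F q$ if there are $q''\in F$, $w=uv$ with $p\overset{u}{\leadsto}q''\overset{v}{\leadsto}q$. For $w,u\in\Sigma^+$, $w\sim u$ iff for all $p,q$: $p\overset{w}{\leadsto}q\Leftrightarrow p\overset{u}{\leadsto}q$ and $p\overset{w}{\leadsto}_Fq\Leftrightarrow p\overset{u}{\leadsto}_Fq$. $\mathcal Q=\Sigma^+/{\sim}\uplus\{[\epsilon]\}$ with $[\epsilon]=\{\epsilon\}$; concatenation of classes is well defined. Let $\mathcal C=\{(C,D)\mid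 C,D\in\mathcal Q,\ CD=C,\ DD=D\}$. Define $\mathfrak f(V)=\{(C,D)\in\mathcal C\mid CD^\omega\cap V\neq\emptyset\}$ and $\mathfrak g(\mathcal V)=\bigcup_{(C,D)\in\mathcal V}CD^\omega$; the closure is $\mathfrak c(\mathcal V)=\bigcup_{n\ge1}(\mathfrak f\circ\mathfrak g)^n(\mathcal V)$. $\mathcal M_{\le\omega}=\{\mathfrak c(\mathfrak f(V))\mid V\subseteq\Sigma^{\le\omega}\}$, $\mathcal M_*=\mathcal P(\mathcal Q)$. $\alpha_*(U)=\{C\in\mathcal Q\mid C\cap U\neq\emptyset\}$, $\alpha_{\le\omega}(V)=\mathfrak c(\mathfrak f(V))$, $\gamma_*(\mathcal U)=\bigcup_{C\in\mathcal U}C$, $\gamma_{\le\omega}(\mathcal V)=\mathfrak g(\mathcal V)$. *)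

From mathcomp Require Import all_boot.
Set Implicit Arguments. Unset Strict Implicit. Unset Printing Implicit Defensive.

(* Words over a finite alphabet S: finite words are [seq S], infinite words
   are streams [nat -> S]; Sigma^{<=omega} is [word S]. *)
Inductive word (S : Type) : Type :=
| Fw : seq S -> word S
| Iw : (nat -> S) -> word S.
Arguments Fw {S}. Arguments Iw {S}.

Definition flang (S : Type) := seq S -> Prop.
Definition wlang (S : Type) := word S -> Prop.

Record eba (S Q : finType) := EBA {
  delta : Q -> S -> {set Q};
  q0 : Q;
  fin : {set Q} }.

Section Defs.
Variables (S Q : finType) (A : eba S Q).

Fixpoint reach (p : Q) (w : seq S) (q : Q) : Prop :=
  match w with
  | [::] => p = q
  | a :: w' => exists2 p', p' \in delta A p a & reach p' w' q
  end.

Definition reachF (p : Q) (w : seq S) (q : Q) : Prop :=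
  exists q'', q'' \in fin A /\ exists u v, w = u ++ v /\ reach p u q'' /\ reach q'' v q.

Definition accepts (x : word S) : Prop :=
  match x with
  | Fw w => exists q, q \in fin A /\ reach (q0 A) w q
  | Iw s => exists r : nat -> Q, r 0 = q0 A /\ (forall n, r n.+1 \in delta A (r n) (s n))
              /\ forall N, exists m, N <= m /\ r m \in fin A
  end.

Definition sim (w u : seq S) : Prop :=
  forall p q, (reach p w q <-> reach p u q) /\ (reachF p w q <-> reachF p u q).

Definition cls (w : seq S) : flang S :=
  if w is [::] then (fun u => u = [::]) else (fun u => u <> [::] /\ sim w u).

(* membership in the set of classes Q = Sigma^+/~ (+) {[eps]} *)
Definition is_cls (C : flang S) : Prop := exists w, C = cls w.

Definition cls_cat (C D : flang S) : flang S :=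
  fun u => exists x y, C x /\ D y /\ cls (x ++ y) u.

Definition Cpairs (CD : flang S * flang S) : Prop :=
  is_cls CD.1 /\ is_cls CD.2 /\ cls_cat CD.1 CD.2 = CD.1 /\ cls_cat CD.2 CD.2 = CD.2.

Definition wcat (u : seq S) (x : word S) : word S :=
  match x with
  | Fw v => Fw (u ++ v)
  | Iw s => Iw (fun i => if i < size u then nth (s 0) u i else s (i - size u))
  end.

Definition flat_upto (ws : nat -> seq S) (N : nat) : seq S :=
  flatten [seq ws i | i <- iota 0 N].

(* x = w_0 w_1 w_2 ... (infinite concatenation of finite words, a finite word
   if from some point on all w_i are empty, an infinite word otherwise) *)
Definition omega_cat (ws : nat -> seq S) (x : word S) : Prop :=
  match x with
  | Fw v => exists N, (forall n, N <= n -> ws n = [::]) /\ v = flat_upto ws N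
  | Iw s => (forall N, exists n, N <= n /\ ws n <> [::]) /\
            forall N i, i < size (flat_upto ws N) -> s i = nth (s 0) (flat_upto ws N) i
  end.

Definition omega (D : flang S) : wlang S :=
  fun x => exists ws, (forall n, D (ws n)) /\ omega_cat ws x.

Definition CDomega (C D : flang S) : wlang S :=
  fun x => exists u y, C u /\ omega D y /\ x = wcat u y.

Definition ffun_ (V : wlang S) : flang S * flang S -> Prop :=
  fun CD => Cpairs CD /\ exists x, CDomega CD.1 CD.2 x /\ V x.

Definition gfun_ (VV : flang S * flang S -> Prop) : wlang S :=
  fun x => exists CD, VV CD /\ CDomega CD.1 CD.2 x.

Definition closure (VV : flang S * flang S -> Prop) : flang S * flang S -> Prop :=
  fun CD => exists n, 1 <= n /\ iter n (fun X => ffun_ (gfun_ X)) VV CD.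

Definition alpha_star (U : flang S) : flang S -> Prop :=
  fun C => is_cls C /\ exists u, C u /\ U u.
Definition gamma_star (UU : flang S -> Prop) : flang S :=
  fun u => exists C, UU C /\ C u.
Definition alpha_omega (V : wlang S) : flang S * flang S -> Prop :=
  closure (ffun_ V).
Definition gamma_omega (VV : flang S * flang S -> Prop) : wlang S := gfun_ VV.

End Defs.

From mathcomp Require Import all_boot.
From Stdlib Require Import Classical ClassicalEpsilon FunctionalExtensionality PropExtensionality.
Set Implicit Arguments. Unset Strict Implicit. Unset Printing Implicit Defensive.

(* Both directions rest on two facts about the abstraction.
   - Extensivity, L <= gamma(alpha(L)).  For finite words, u lies in its class
     [u].  For words of Sigma^{<=omega} this is the covering lemma: every word
     lies in some C D^omega with (C, D) in the set C of pairs.  A finite word v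
     lies in [v]{eps}^omega; for an infinite word we colour each factor by its
     ~-type (a finite colour) and use the infinite Ramsey theorem for pairs to
     cut it into a prefix followed by ~-equivalent idempotent blocks.
   - Soundness, gamma(alpha(L)) <= L(A) whenever L <= L(A).  Acceptance only
     depends on ~-classes: for finite words directly, and for infinite words
     by the saturation lemma (if C D^omega meets L(A) then it is included in
     L(A)), proved by reading runs block by block along factorizations of
     infinite words into nonempty blocks.  Saturation makes every step
     V |-> g(f(V)) of the closure preserve inclusion in L(A). *)

Definition infinitely (P : nat -> Prop) := forall N, exists n, N <= n /\ P n.

Lemma infinite_pigeonhole (K : finType) (P : nat -> Prop) (f : nat -> K) :
  infinitely P -> exists c, infinitely (fun n => P n /\ f n = c).
Proof.
move=> infP; apply: NNPP => no_class.
have bound c : exists N, forall n, N <= n -> P n -> f n <> c.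
  apply: NNPP => unbounded; apply: no_class; exists c => N; apply: NNPP => none.
  by apply: unbounded; exists N => n leNn Pn fn_c; apply: none; exists n.
pose Nc c := epsilon (inhabits 0) (fun N => forall n, N <= n -> P n -> f n <> c).
have NcP c : forall n, Nc c <= n -> P n -> f n <> c by exact: epsilon_spec (bound c).
have [n [le_max Pn]] := infP (\max_c Nc c).
by apply: (NcP (f n) n) => //; apply: leq_trans le_max; apply: leq_bigmax.
Qed.

(* We build points a_0, a_1,...
   and infinite sets P_0 ⊇ P_1 ⊇ ... with a_i < P_i, such that all pairs
   (a_i, n), n in P_(i+1), have the same colour c_i; then pigeonhole on c_i. *)
Section Ramsey.
Variables (K : finType) (col : nat -> nat -> K).

Definition mono_colour a P :=
  epsilon (inhabits (col 0 0)) (fun c => infinitely (fun n => P n /\ col a n = c)).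
Definition mono_part a P n := P n /\ col a n = mono_colour a P.
Definition next_point a P := epsilon (inhabits 0) (mono_part a P).

Lemma mono_part_infinite a P : infinitely P -> infinitely (mono_part a P).
Proof. by move=> /(infinite_pigeonhole (col a)) ex_c; apply: epsilon_spec ex_c. Qed.

Lemma next_pointP a P : infinitely P -> mono_part a P (next_point a P).
Proof. by move=> /(mono_part_infinite a)/(_ 0) [n [_ Pn]]; apply: epsilon_spec; exists n. Qed.

Fixpoint stage i : nat * (nat -> Prop) :=
  if i is i'.+1 then
    let: (a, P) := stage i' in
    (next_point a P, fun n => mono_part a P n /\ next_point a P < n)
  else (0, fun n : nat => is_true (0 < n)).

Definition point i := (stage i).1.
Definition domain i := (stage i).2.
Definition colour i := mono_colour (point i) (domain i).
Definition part i := mono_part (point i) (domain i).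

Lemma point_S i : point i.+1 = next_point (point i) (domain i).
Proof. by rewrite /point /domain /=; case: (stage i). Qed.

Lemma domain_S i n : domain i.+1 n = (part i n /\ point i.+1 < n).
Proof. by rewrite point_S /part /point /domain /=; case: (stage i). Qed.

Lemma stage_inv i : infinitely (domain i) /\ forall n, domain i n -> point i < n.
Proof.
elim: i => [|i [infD gtD]]; first by split=> [N|//]; exists N.+1.
split=> [N|n]; last by rewrite domain_S => -[].
have [n [len partn]] := mono_part_infinite (point i) infD (maxn N (point i.+1)).+1.
exists n; rewrite domain_S; split; [|split] => //.
  exact: leq_trans (leq_maxl _ _) (ltnW len).
by apply: leq_trans len; rewrite ltnS leq_maxr.
Qed.

Lemma part_next i : part i (point i.+1).
Proof. by rewrite point_S; apply: next_pointP; case: (stage_inv i). Qed.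

Lemma part_antitone i d n : part (i + d) n -> part i n.
Proof.
elim: d => [|d IH]; first by rewrite addn0.
by rewrite addnS => -[+ _]; rewrite domain_S => -[/IH].
Qed.

Lemma point_increasing i : point i < point i.+1.
Proof. by apply: (stage_inv i).2; case: (part_next i). Qed.

Lemma colour_point i j : i < j -> col (point i) (point j) = colour i.
Proof.
case: j => // j; rewrite ltnS => le_ij.
by have := part_next j; rewrite -(subnKC le_ij) => /part_antitone[].
Qed.

Theorem ramsey : exists a : nat -> nat, (forall i, a i < a i.+1) /\
  exists c, forall i j, i < j -> col (a i) (a j) = c.
Proof.
have infT : infinitely (fun _ => True) by move=> N; exists N.
have [c0 infc0] := infinite_pigeonhole colour infT.
pose pick N := epsilon (inhabits 0) (fun n => N <= n /\ (True /\ colour n = c0)).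
have pickP N : N <= pick N /\ (True /\ colour (pick N) = c0) by exact: epsilon_spec (infc0 N).
pose e := fix e k := if k is k'.+1 then pick (e k').+1 else pick 0.
have e_incr k : e k < e k.+1 by exact: (pickP _).1.
exists (point \o e); split => [k|]; first exact: homo_ltn ltn_trans point_increasing _ _ _.
exists c0 => i j lt_ij; rewrite /= colour_point; last exact: homo_ltn ltn_trans e_incr _ _ _.
by case: i {lt_ij} => [|i]; apply: (pickP _).2.2.
Qed.

End Ramsey.

Lemma cat_eq_cat (T : Type) (a b x y : seq T) : a ++ b = x ++ y ->
  (exists z, a = x ++ z /\ y = z ++ b) \/ (exists z, x = a ++ z /\ b = z ++ y).
Proof.
elim: a x => [|c a IH] [|d x] //= E; try by [right; exists (d :: x) | left; exists (c :: a)].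
- by right; exists [::].
- by case: E => -> /IH [[z [-> ->]]|[z [-> ->]]]; [left|right]; exists z.
Qed.

Definition segment (S : Type) (t : nat -> S) i d := map t (iota i d).

Lemma segment_cat (S : Type) (t : nat -> S) i d e :
  segment t i (d + e) = segment t i d ++ segment t (i + d) e.
Proof. by rewrite /segment iotaD map_cat. Qed.

Lemma size_segment (S : Type) (t : nat -> S) i d : size (segment t i d) = d.
Proof. by rewrite /segment size_map size_iota. Qed.

Lemma nth_segment (S : Type) (t : nat -> S) i d k x0 :
  k < d -> nth x0 (segment t i d) k = t (i + k).
Proof. by move=> lt_kd; rewrite /segment (nth_map 0) ?size_iota // nth_iota. Qed.

Section Automaton.
Variables (S Q : finType) (A : eba S Q).

Lemma reach_cat p a b q :
  reach A p (a ++ b) q <-> exists m, reach A p a m /\ reach A m b q.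
Proof.
elim: a p => [|x a IH] p /=; first by split=> [|[m [->]]] //; exists p.
split=> [[p' dp /IH [m [pm mq]]]|[m [[p' dp pm] mq]]]; first by exists m; split=> //; exists p'.
by exists p' => //; apply/IH; exists m.
Qed.

Lemma reachF_cat p a b q :
  reachF A p (a ++ b) q <-> exists m, (reachF A p a m /\ reach A m b q) \/
                                      (reach A p a m /\ reachF A m b q).
Proof.
split=> [[f [Ff [x [y [E [px fy]]]]]]|[m [[[f [Ff [x [y [-> [px fy]]]]]] mq]|
                                       [pm [f [Ff [x [y [-> [mx fy]]]]]]]]]].
- case: (cat_eq_cat E) => [[z [? ?]]|[z [? ?]]]; subst.
    move/reach_cat: fy => [m [fz mb]]; exists m; left; split=> //.
    by exists f; split=> //; exists x, z.
  move/reach_cat: px => [m [pa mz]]; exists m; right; split=> //.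
  by exists f; split=> //; exists z, y.
- exists f; split=> //; exists x, (y ++ b); rewrite catA; split=> //; split=> //.
  by apply/reach_cat; exists m.
- exists f; split=> //; exists (a ++ x), y; rewrite catA; split=> //; split=> //.
  by apply/reach_cat; exists m.
Qed.

Lemma sim_refl w : sim A w w. Proof. by []. Qed.

Lemma sim_sym w u : sim A w u -> sim A u w.
Proof. by move=> wu p q; case: (wu p q) => ? ?; split; symmetry. Qed.

Lemma sim_trans w u v : sim A w u -> sim A u v -> sim A w v.
Proof.
move=> wu uv p q; case: (wu p q) (uv p q) => [? ?] [? ?].
by split; apply: iff_trans; eassumption.
Qed.

Lemma sim_cat a a' b b' : sim A a a' -> sim A b b' -> sim A (a ++ b) (a' ++ b').
Proof.
move=> aa' bb' p q; split.
  rewrite !reach_cat; split=> -[m [pa mb]]; exists m.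
    by split; [apply/(proj1 (aa' p m)) | apply/(proj1 (bb' m q))].
  by split; [apply/(proj1 (aa' p m)) | apply/(proj1 (bb' m q))].
rewrite !reachF_cat; split=> -[m [[pa mb]|[pa mb]]]; exists m;
  [left|right|left|right]; split;
  by [apply/(proj1 (aa' p m)) | apply/(proj2 (aa' p m)) |
      apply/(proj1 (bb' m q)) | apply/(proj2 (bb' m q))].
Qed.

Lemma cls_sim w a b : cls A w a -> cls A w b -> sim A a b.
Proof.
case: w => [|c w] /=; first by move=> -> ->.
by move=> [_ wa] [_ wb]; apply: sim_trans (sim_sym wa) wb.
Qed.

Lemma cls_self w : cls A w w.
Proof. by case: w => [|c w] //=; split. Qed.

Lemma cls_of_sim w v : w <> [::] -> v <> [::] -> sim A w v -> cls A w v.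
Proof. by case: w => [//|c w] _ nv wv; split. Qed.

Lemma accepts_sim a b : sim A a b -> accepts A (Fw a) -> accepts A (Fw b).
Proof. by move=> ab [q [Fq rq]]; exists q; split=> //; apply/(proj1 (ab _ _)). Qed.

Section Runs.
Variables (r : nat -> Q) (t : nat -> S).
Hypothesis run : forall i, r i.+1 \in delta A (r i) (t i).

Lemma run_reach d i : reach A (r i) (segment t i d) (r (i + d)).
Proof.
elim: d i => [|d IH] i /=; first by rewrite addn0.
by exists (r i.+1) => //; rewrite -addSnnS; apply: IH.
Qed.

Lemma run_reachF d i m : m <= d -> r (i + m) \in fin A ->
  reachF A (r i) (segment t i d) (r (i + d)).
Proof.
move=> le_md Fm; exists (r (i + m)); split=> //.
exists (segment t i m), (segment t (i + m) (d - m)).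
rewrite -segment_cat subnKC //; split; split=> //; first exact: run_reach.
by have := run_reach (d - m) (i + m); rewrite -addnA subnKC.
Qed.

End Runs.

Definition path_on (x0 : S) (w : seq S) (f : nat -> Q) :=
  forall k, k < size w -> f k.+1 \in delta A (f k) (nth x0 w k).

Lemma reach_path x0 p w q : reach A p w q ->
  exists f, [/\ f 0 = p, f (size w) = q & path_on x0 w f].
Proof.
elim: w p => [|a w IH] p /=; first by move=> ->; exists (fun _ => q).
case=> p' dp /IH [f [f0 fw fpath]].
exists (fun k => if k is k'.+1 then f k' else p); split=> // -[|k] /= lt_k.
  by rewrite f0.
exact: fpath.
Qed.

Lemma path_on_cat x0 x y f g : f (size x) = g 0 -> path_on x0 x f -> path_on x0 y g ->
  path_on x0 (x ++ y) (fun k => if k < size x then f k else g (k - size x)).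
Proof.
move=> fg fpath gpath k; rewrite size_cat nth_cat => lt_k.
case: (ltnP k (size x)) => lt_kx.
  case: (ltnP k.+1 (size x)) => [|le_x]; first by move=> _; apply: fpath.
  have Ek : k.+1 = size x by apply/eqP; rewrite eqn_leq lt_kx.
  by rewrite Ek subnn -fg -Ek; apply: fpath.
rewrite ltnNge leqW //= subSn //; apply: gpath.
by rewrite ltn_subLR.
Qed.

Lemma reachF_path x0 p w q : reachF A p w q -> exists f,
  [/\ f 0 = p, f (size w) = q, path_on x0 w f & exists2 m, m <= size w & f m \in fin A].
Proof.
case=> f'' [Ff [x [y [-> [px fy]]]]].
have [f [f0 fx fpath]] := reach_path x0 px; have [g [g0 gy gpath]] := reach_path x0 fy.
exists (fun k => if k < size x then f k else g (k - size x)); split.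
- by case: (posnP (size x)) => // x_nil; rewrite x_nil subn0 g0 -fx x_nil f0.
- by rewrite size_cat ltnNge leq_addr addKn.
- by apply: path_on_cat => //; rewrite fx g0.
- by exists (size x); rewrite ?size_cat ?leq_addr // ltnn subnn g0.
Qed.

End Automaton.

(* Laying blocks of sizes sz 0, sz 1, ... end to end: block n starts at
   position block_start sz n, and locate sz i is the (block, offset) pair of
   position i. *)
Fixpoint block_start (sz : nat -> nat) n :=
  if n is n'.+1 then block_start sz n' + sz n' else 0.

Fixpoint locate (sz : nat -> nat) i : nat * nat :=
  if i is i'.+1 then
    let: (n, k) := locate sz i' in if k.+1 < sz n then (n, k.+1) else (n.+1, 0)
  else (0, 0).

Section Blocks.
Variables (sz : nat -> nat) (sz_pos : forall n, 0 < sz n).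

Lemma locateP i : (locate sz i).2 < sz (locate sz i).1 /\
                  i = block_start sz (locate sz i).1 + (locate sz i).2.
Proof.
elim: i => [|i] /=; first by rewrite sz_pos.
case: (locate sz i) => n k /= [lt_k ->]; case: ifP => [lt_Sk|ge_Sk] /=.
  by rewrite addnS.
have Ek : k.+1 = sz n by apply/eqP; rewrite eqn_leq lt_k leqNgt ge_Sk.
by rewrite sz_pos addn0 -Ek addnS.
Qed.

Lemma block_start_mono : {homo block_start sz : n m / n <= m}.
Proof. by apply: homo_leq leqnn leq_trans _ => n; apply: leq_addr. Qed.

Lemma block_start_ge n : n <= block_start sz n.
Proof. by elim: n => //= n IH; rewrite -addn1 leq_add. Qed.

Lemma in_block_lt n k n' : k < sz n -> n < n' -> block_start sz n + k < block_start sz n'.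
Proof.
move=> lt_k lt_nn'; apply: leq_trans (block_start_mono lt_nn').
by rewrite /= ltn_add2l.
Qed.

Lemma locate_eq n k : k < sz n -> locate sz (block_start sz n + k) = (n, k).
Proof.
have [] := locateP (block_start sz n + k); case: (locate sz _) => n' k' /= lt_k' E lt_k.
suff En : n' = n by move: E; rewrite En => /eqP; rewrite eqn_add2l => /eqP ->.
case: (ltngtP n' n) => // lt_n.
  by have := in_block_lt lt_k' lt_n; rewrite -E ltnNge leq_addr.
by have := in_block_lt lt_k lt_n; rewrite E ltnNge leq_addr.
Qed.

End Blocks.

Lemma flat_upto_S (S : finType) (B : nat -> seq S) n :
  flat_upto B n.+1 = flat_upto B n ++ B n.
Proof. by rewrite /flat_upto -addn1 iotaD map_cat flatten_cat /= cats0. Qed.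

Lemma size_flat_upto (S : finType) (B : nat -> seq S) n :
  size (flat_upto B n) = block_start (fun j => size (B j)) n.
Proof. by elim: n => //= n IH; rewrite flat_upto_S size_cat IH. Qed.

Definition factorization (S : finType) (t : nat -> S) (B : nat -> seq S) :=
  (forall n, B n <> [::]) /\
  forall N, flat_upto B N = segment t 0 (size (flat_upto B N)).

Lemma factorization_block (S : finType) (t : nat -> S) B : factorization t B ->
  forall n, B n = segment t (block_start (fun j => size (B j)) n) (size (B n)).
Proof.
case=> _ pref n; have := pref n.+1.
rewrite flat_upto_S size_cat segment_cat -pref add0n size_flat_upto => E.
by have := f_equal (drop (size (flat_upto B n))) E; rewrite !drop_size_cat.
Qed.

Section BlockRuns.
Variables (S Q : finType) (A : eba S Q).

Definition block_run (B : nat -> seq S) (P : nat -> Q) :=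
  [/\ P 0 = q0 A, forall n, reach A (P n) (B n) (P n.+1) &
      infinitely (fun n => reachF A (P n) (B n) (P n.+1))].

Section Factorization.
Variables (t : nat -> S) (B : nat -> seq S).
Hypothesis fact : factorization t B.

Let sz n := size (B n).
Let sz_pos n : 0 < sz n.
Proof. by rewrite lt0n size_eq0; apply/eqP; apply: fact.1. Qed.
Let blockE := factorization_block fact.

Lemma block_run_of_accepts : accepts A (Iw t) -> exists P, block_run B P.
Proof.
move=> [r [r0 [run infF]]]; exists (fun n => r (block_start sz n)); split=> // [n|N].
  by rewrite (blockE n); apply: run_reach.
have [m [le_m Fm]] := infF (block_start sz N).
have [] := locateP sz_pos m; case: (locate sz m) => n k /= lt_k Em.
exists n; split.
  rewrite leqNgt; apply/negP => lt_nN.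
  by have := in_block_lt lt_k lt_nN; rewrite -Em ltnNge le_m.
by rewrite (blockE n); apply: (run_reachF run (m := k)); rewrite -?Em // ltnW.
Qed.

(* Conversely, a block run is refined to an accepting run by choosing, in
   every block, a path of states through F whenever one exists. *)
Lemma accepts_of_block_run P : block_run B P -> accepts A (Iw t).
Proof.
move=> [P0 reachP infF].
pose spec n f := [/\ f 0 = P n, f (sz n) = P n.+1, path_on A (t 0) (B n) f &
  reachF A (P n) (B n) (P n.+1) -> exists2 m, m <= sz n & f m \in fin A].
have spec_ex n : exists f, spec n f.
  case: (classic (reachF A (P n) (B n) (P n.+1))) => [Fn|nFn].
    by have [f [? ? ? ?]] := reachF_path (t 0) Fn; exists f.
  by have [f [? ? ?]] := reach_path (t 0) (reachP n); exists f; split=> // /nFn.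
pose fs n := epsilon (inhabits (fun _ : nat => q0 A)) (spec n).
have fsP n : spec n (fs n) by exact: epsilon_spec (spec_ex n).
exists (fun i => fs (locate sz i).1 (locate sz i).2); split; [|split].
- by case: (fsP 0) => /= ->.
- move=> i; have [] := locateP sz_pos i.
  rewrite [locate sz i.+1]/=; case: (locate sz i) => n k /= lt_k Ei.
  have -> : t i = nth (t 0) (B n) k by rewrite (blockE n) nth_segment // -Ei.
  case: (fsP n) => _ fn_end fn_path _.
  case: ifP => [lt_Sk|ge_Sk] /=; first exact: fn_path.
  have Ek : k.+1 = sz n by apply/eqP; rewrite eqn_leq lt_k leqNgt ge_Sk.
  by case: (fsP n.+1) => -> _ _ _; rewrite -fn_end -Ek; apply: fn_path.
- move=> N; have [n [le_Nn Fn]] := infF N.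
  case: (fsP n) => _ fn_end _ /(_ Fn) [m le_m Fm].
  case: (ltngtP m (sz n)) le_m => // [lt_m|Em] _.
    exists (block_start sz n + m); rewrite locate_eq //; split=> //.
    exact: leq_trans le_Nn (leq_trans (block_start_ge sz_pos n) (leq_addr _ _)).
  exists (block_start sz n.+1 + 0); rewrite locate_eq //; split.
    by rewrite addn0; apply: leq_trans (leqW le_Nn) (block_start_ge sz_pos _).
  by case: (fsP n.+1) => /= ->; rewrite -fn_end -Em.
Qed.

End Factorization.

Lemma accepts_blockwise_sim t t' B B' : factorization t B -> factorization t' B' ->
  (forall n, sim A (B n) (B' n)) -> accepts A (Iw t) -> accepts A (Iw t').
Proof.
move=> fact fact' simB /(block_run_of_accepts fact) [P [P0 reachP infF]].
apply: (accepts_of_block_run fact' (P := P)); split=> // [n|N].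
  exact/(proj1 (simB n _ _)).
have [n [le_n Fn]] := infF N; exists n; split=> //.
exact/(proj2 (simB n _ _)).
Qed.

End BlockRuns.

Section Saturation.
Variables (S Q : finType) (A : eba S Q).

Lemma flat_upto_nil (ws : nat -> seq S) N : (forall n, ws n = [::]) -> flat_upto ws N = [::].
Proof. by move=> nil; elim: N => //= N IH; rewrite flat_upto_S IH nil. Qed.

Lemma omega_cat_nil ws (x : word S) : (forall n, ws n = [::]) -> omega_cat ws x -> x = Fw [::].
Proof.
move=> nil; case: x => [v|s] /=; first by case=> N [_ ->]; rewrite flat_upto_nil.
by case=> /(_ 0) [n [_]]; rewrite nil.
Qed.

Lemma omega_cat_nonempty ws (x : word S) : (forall n, ws n <> [::]) -> omega_cat ws x ->
  exists2 s, x = Iw s &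
    forall N i, i < size (flat_upto ws N) -> s i = nth (s 0) (flat_upto ws N) i.
Proof.
move=> ne; case: x => [v|s] /=; last by case=> _ pref; exists s.
by case=> N [/(_ N (leqnn N)) /(ne N)].
Qed.

Lemma segment_of_nth (t : nat -> S) l :
  (forall i, i < size l -> t i = nth (t 0) l i) -> l = segment t 0 (size l).
Proof.
move=> tl; apply: (eq_from_nth (x0 := t 0)); first by rewrite size_segment.
by move=> i lt_i; rewrite nth_segment // add0n (tl i lt_i).
Qed.

(* The stream of wcat u (Iw s), and the blocks obtained by gluing u to w_0. *)
Definition prepend (u : seq S) (s : nat -> S) i :=
  if i < size u then nth (s 0) u i else s (i - size u).

Definition glue_first (u : seq S) (ws : nat -> seq S) n :=
  if n is 0 then u ++ ws 0 else ws n.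

Lemma flat_upto_glue_first u ws N :
  flat_upto (glue_first u ws) N.+1 = u ++ flat_upto ws N.+1.
Proof.
elim: N => [|N IH]; first by rewrite !flat_upto_S.
by rewrite flat_upto_S IH [in RHS]flat_upto_S catA.
Qed.

Lemma factorization_prepend u ws s : (forall n, ws n <> [::]) ->
  (forall N i, i < size (flat_upto ws N) -> s i = nth (s 0) (flat_upto ws N) i) ->
  factorization (prepend u s) (glue_first u ws).
Proof.
move=> ne pref; split=> [[|n]|[|N]] //=; first by case: u => //=; apply: ne.
rewrite flat_upto_glue_first; apply: segment_of_nth => i; rewrite size_cat nth_cat /prepend.
case: ifP => [lt_iu _|ge_i lt_i]; first exact: set_nth_default.
have lt_i' : i - size u < size (flat_upto ws N.+1) by rewrite ltn_subLR // leqNgt ge_i.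
by rewrite (pref N.+1 _ lt_i'); apply: set_nth_default.
Qed.

(* Two words of C D^omega decompose into
   ~-equivalent blocks, and acceptance only depends on the ~-classes of the
   blocks. *)
Lemma CDomega_saturated C D x y : is_cls A C -> is_cls A D ->
  CDomega C D x -> CDomega C D y -> accepts A x -> accepts A y.
Proof.
move=> [c ->] [d ->] [u [x' [cu [[ws [dws x'ws]] ->]]]] [v [y' [cv [[ws' [dws' y'ws']] ->]]]].
have uv := cls_sim cu cv.
case: d dws dws' => [|e d] dws dws'.
  rewrite (omega_cat_nil dws x'ws) (omega_cat_nil dws' y'ws') /= !cats0.
  exact: accepts_sim.
have ne n : ws n <> [::] by case: (dws n).
have ne' n : ws' n <> [::] by case: (dws' n).
have [s -> pref] := omega_cat_nonempty ne x'ws.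
have [s' -> pref'] := omega_cat_nonempty ne' y'ws'.
apply: (accepts_blockwise_sim (factorization_prepend u ne pref)
                              (factorization_prepend v ne' pref')).
case=> [|n] /=; first exact: sim_cat uv (cls_sim (dws 0) (dws' 0)).
exact: cls_sim (dws n.+1) (dws' n.+1).
Qed.

End Saturation.

Definition factor (S : Type) (s : nat -> S) i j := segment s i (j - i).

Lemma factor_cat (S : Type) (s : nat -> S) i j k : i <= j -> j <= k ->
  factor s i j ++ factor s j k = factor s i k.
Proof.
move=> le_ij le_jk; rewrite /factor -[in segment s j _](subnKC le_ij) -segment_cat.
by rewrite (subnKC le_ij) addnC addnBA // subnK.
Qed.

Section Covering.
Variables (S Q : finType) (A : eba S Q).

Lemma cls_cat_mem u w x y : cls A u x -> cls A w y -> cls A (u ++ w) (x ++ y).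
Proof.
case: u => [|a u] /= ux; first by rewrite ux.
case: w => [|b w] /= wy; first by rewrite wy !cats0.
case: ux wy => [nx ux] [ny wy]; split; last exact: (sim_cat ux wy).
by case: x nx {ux}.
Qed.

Lemma cls_eq w x : cls A w x -> cls A x = cls A w.
Proof.
move=> wx; apply: functional_extensionality => z; apply: propositional_extensionality.
case: w wx => [|c w] /=; first by move=> ->.
case: x => [|d x] [] //= _ wx; split=> -[nz sz]; split=> //.
  exact: sim_trans wx sz.
exact: sim_trans (sim_sym wx) sz.
Qed.

Lemma cls_cat_cls u w : cls_cat A (cls A u) (cls A w) = cls A (u ++ w).
Proof.
apply: functional_extensionality => z; apply: propositional_extensionality; split.
  by case=> x [y [ux [wy]]]; rewrite (cls_eq (cls_cat_mem ux wy)).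
by move=> uwz; exists u, w; split; [|split]; rewrite //; apply: cls_self.
Qed.

Lemma Cpairs_cls u w : cls A u (u ++ w) -> cls A w (w ++ w) -> Cpairs A (cls A u, cls A w).
Proof.
move=> uw ww; split; first by exists u.
by split; [exists w | rewrite /= !cls_cat_cls (cls_eq uw) (cls_eq ww)].
Qed.

(* The ~-type of a word, a colour taken from a finite set: its reachability
   and F-reachability relations.  Words of equal type are ~-equivalent. *)
Definition truth (P : Prop) : bool := if excluded_middle_informative P then true else false.

Lemma truthP P : truth P <-> P.
Proof. by rewrite /truth; case: excluded_middle_informative. Qed.

Definition sim_type (w : seq S) : {ffun Q * Q -> bool} * {ffun Q * Q -> bool} :=
  ([ffun pq => truth (reach A pq.1 w pq.2)], [ffun pq => truth (reachF A pq.1 w pq.2)]).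

Lemma sim_of_type w w' : sim_type w = sim_type w' -> sim A w w'.
Proof.
case=> T1 T2 p q; pose at_pq (f : {ffun Q * Q -> bool}) := f (p, q).
have := congr1 at_pq T1; have := congr1 at_pq T2; rewrite /at_pq !ffunE /= => E2 E1.
by split; split=> H; apply/truthP;
  [rewrite -E1 | rewrite E1 | rewrite -E2 | rewrite E2]; apply/truthP.
Qed.

Lemma omega_cat_cuts (s : nat -> S) (a : nat -> nat) : (forall n, a n < a n.+1) ->
  omega_cat (fun n => factor s (a n) (a n.+1)) (Iw (fun i => s (a 0 + i))).
Proof.
move=> a_incr; have a_mono := homo_leq leqnn leq_trans (fun n => ltnW (a_incr n)).
have flatE N : flat_upto (fun n => factor s (a n) (a n.+1)) N = factor s (a 0) (a N).
  elim: N => [|N IH]; first by rewrite /factor subnn.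
  by rewrite flat_upto_S IH factor_cat // ?a_mono // ltnW.
split=> [N|N i]; last by rewrite flatE size_segment => lt_i; rewrite nth_segment.
exists N; split=> // /eqP.
by rewrite -size_eq0 size_segment subn_eq0 leqNgt a_incr.
Qed.

Lemma wcat_segment (s : nat -> S) k : wcat (segment s 0 k) (Iw (fun i => s (k + i))) = Iw s.
Proof.
congr Iw; apply: functional_extensionality => i; rewrite size_segment.
by case: ltnP => [lt_ik|le_ki]; [rewrite nth_segment | rewrite subnKC].
Qed.

(* Every infinite word lies in some C D^omega with (C, D) in C: by Ramsey's
   theorem there are cut points a 0 < a 1 < ... such that all factors between
   two cut points have the same ~-type, so D is the class of those factors and
   C is the class of the prefix up to a 1. *)
Lemma cover_infinite s : exists C D, Cpairs A (C, D) /\ CDomega C D (Iw s).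
Proof.
have [a [a_incr [c colour_c]]] := ramsey (fun i j => sim_type (factor s i j)).
have a_mono := homo_ltn ltn_trans a_incr.
have same i j i' j' : i < j -> i' < j' ->
    sim A (factor s (a i) (a j)) (factor s (a i') (a j')).
  by move=> lt_ij lt_ij'; apply: sim_of_type; rewrite colour_c // colour_c.
have ne i j : i < j -> factor s (a i) (a j) <> [::].
  by move=> lt_ij /eqP; rewrite -size_eq0 size_segment subn_eq0 leqNgt a_mono.
have [le01 le12 le23] : [/\ a 0 <= a 1, a 1 <= a 2 & a 2 <= a 3] by split; apply: ltnW.
have le02 : a 0 <= a 2 by apply: leq_trans le12.
have u_split : factor s 0 (a 1) = factor s 0 (a 0) ++ factor s (a 0) (a 1).
  by rewrite factor_cat.
have u_ne : factor s 0 (a 1) <> [::] by rewrite u_split; case: (factor s 0 (a 0)) (ne 0 1 isT).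
have w_ne : factor s (a 1) (a 2) <> [::] by apply: ne.
have uw : cls A (factor s 0 (a 1)) (factor s 0 (a 1) ++ factor s (a 1) (a 2)).
  apply: cls_of_sim => //; first by case: (factor s 0 (a 1)) u_ne.
  rewrite [in X in sim A _ X]factor_cat ?(leq_trans le01) // -(factor_cat s (leq0n _) le02).
  by rewrite u_split; apply: sim_cat; [apply: sim_refl | apply: same].
have ww : cls A (factor s (a 1) (a 2)) (factor s (a 1) (a 2) ++ factor s (a 1) (a 2)).
  apply: cls_of_sim => //; first by case: (factor s (a 1) (a 2)) w_ne.
  apply: (sim_trans (u := factor s (a 1) (a 3))); first by apply: same.
  by rewrite -(factor_cat s le12 le23); apply: sim_cat; [apply: sim_refl | apply: same].
exists (cls A (factor s 0 (a 1))), (cls A (factor s (a 1) (a 2))).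
split; first exact: Cpairs_cls.
exists (factor s 0 (a 1)), (Iw (fun i => s (a 1 + i))); split; first exact: cls_self.
split; last by rewrite /factor subn0 wcat_segment.
exists (fun n => factor s (a n.+1) (a n.+2)); split; last exact: omega_cat_cuts.
by move=> n; apply: cls_of_sim => //; [apply: ne | apply: same].
Qed.

(* Hence every word of Sigma^{<=omega} is covered by some C D^omega with (C, D)
   in C; a finite word v lies in [v]{eps}^omega. *)
Lemma cover x : exists C D, Cpairs A (C, D) /\ CDomega C D x.
Proof.
case: x => [v|s]; last exact: cover_infinite.
exists (cls A v), (cls A [::]); split; first by apply: Cpairs_cls => //; rewrite cats0; apply: cls_self.
exists v, (Fw [::]); split; first exact: cls_self.
by split; [exists (fun _ => [::]); split=> //; exists 0 | rewrite /= cats0].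
Qed.

End Covering.

Section Abstraction.
Variables (S Q : finType) (A : eba S Q).

(* gamma_* o alpha_* is extensive, and it maps sublanguages of L(A) to
   sublanguages of L(A) since acceptance only depends on ~-classes. *)
Lemma gamma_alpha_star_extensive (L : flang S) u : L u -> gamma_star (alpha_star A L) u.
Proof.
move=> Lu; exists (cls A u); split; last exact: cls_self.
by split; [exists u | exists u; split=> //; apply: cls_self].
Qed.

Lemma gamma_alpha_star_sound (L : flang S) : (forall u, L u -> accepts A (Fw u)) ->
  forall u, gamma_star (alpha_star A L) u -> accepts A (Fw u).
Proof.
move=> LA u [_ [[[w ->] [v [wv Lv]]] wu]].
exact: accepts_sim (cls_sim wv wu) (LA v Lv).
Qed.

(* gamma_omega o alpha_omega is extensive: a word x of L lies in some
   C D^omega with (C, D) in f(L), hence (C, D) is in (f o g)(f(L)). *)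
Lemma gamma_alpha_omega_extensive (L : wlang S) x : L x -> gamma_omega (alpha_omega A L) x.
Proof.
move=> Lx; have [C [D [CD x_in]]] := cover A x.
have fL : ffun_ A L (C, D) by split=> //; exists x.
exists (C, D); split=> //; exists 1; split=> //=; split=> //.
by exists x; split=> //; exists (C, D).
Qed.

(* One step V |-> g(f(V)) preserves inclusion in L(A), by saturation. *)
Lemma gfun_ffun_sound (V : wlang S) : (forall x, V x -> accepts A x) ->
  forall x, gfun_ (ffun_ A V) x -> accepts A x.
Proof.
move=> VA x [[C D] [[[isC [isD _]] [y [y_in Vy]]] x_in]].
exact: CDomega_saturated isC isD y_in x_in (VA _ Vy).
Qed.

Lemma gamma_alpha_omega_sound (L : wlang S) : (forall x, L x -> accepts A x) ->
  forall x, gamma_omega (alpha_omega A L) x -> accepts A x.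
Proof.
move=> LA; have iterA n x : gfun_ (iter n (fun X => ffun_ A (gfun_ X)) (ffun_ A L)) x ->
    accepts A x.
  by elim: n x => [|n IH] /=; apply: gfun_ffun_sound.
by move=> x [CD [[n [_ CDn]] x_in]]; apply: (iterA n); exists CD.
Qed.

End Abstraction.

Theorem lemma9 (S Q : finType) (A : eba S Q) :
  (forall L : flang S,
     (forall u, gamma_star (alpha_star A L) u -> accepts A (Fw u)) <->
     (forall u, L u -> accepts A (Fw u))) /\
  (forall L : wlang S,
     (forall x, gamma_omega (alpha_omega A L) x -> accepts A x) <->
     (forall x, L x -> accepts A x)).
Proof.
split=> L; split.
- by move=> sound u /(gamma_alpha_star_extensive A)/sound.
- exact: gamma_alpha_star_sound.
- by move=> sound x /(gamma_alpha_omega_extensive A)/sound.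
- exact: gamma_alpha_omega_sound.
Qed.
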